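(* Let $D$ be an oriented graph with $n$ vertices containing no transmitter. Then there exists an oriented graph $D_2$ containing $D$ as an induced suboriented graph such that the set of weak kings of $D_2$ is exactly the vertex set of $D$.
   Context: An oriented graph is a digraph with no loops and no pair of symmetric arcs. A transmitter is a vertex of indegree $0$. For vertices $u,v$ write $u(1\text{-}0)v$ if there is an arc from $u$ to $v$, and $u(0\text{-}0)v$ if there is no arc between $u$ and $v$. A vertex $v$ is weakly reachable within two steps from $u$ if $u(1\text{-}0)v$, or $u(0\text{-}0)v$, or for some vertex $w$ one has $u(1\text{-}0)w(1\text{-}0)v$, or $u(1\text{-}0)w(0\text{-}0)v$, or $u(0\text{-}0)w(1\text{-}0)v$. A vertex $u$ of an oriented graph is a weak king if every other vertex is weakly reachable within two steps from $u$. *)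

From mathcomp Require Import all_boot.
Set Implicit Arguments. Unset Strict Implicit. Unset Printing Implicit Defensive.

Definition oriented (T : finType) (a : rel T) : Prop :=
  (forall x, ~~ a x x) /\ (forall x y, ~~ (a x y && a y x)).

Definition nonadj (T : finType) (a : rel T) (u v : T) : bool :=
  ~~ a u v && ~~ a v u.

Definition transmitter (T : finType) (a : rel T) (v : T) : bool :=
  [forall u, ~~ a u v].

Definition wreach (T : finType) (a : rel T) (u v : T) : bool :=
  [|| a u v, nonadj a u v |
      [exists w, [|| a u w && a w v, a u w && nonadj a w v
                   | nonadj a u w && a w v]]].

Definition weak_king (T : finType) (a : rel T) (u : T) : bool :=
  [forall v, (v != u) ==> wreach a u v].

From mathcomp Require Import all_boot.

Set Implicit Arguments. Unset Strict Implicit. Unset Printing Implicit Defensive.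

(* Pick an in-neighbour [p w] of every vertex [w] (there is no transmitter) and
   add a twin [w'] of every vertex, with arcs [w' -> w], [x -> w'] for all
   original [x <> w], and [(p w)' -> w'].  Every original [x] then reaches each
   original [y <> x] by [x -> y' -> y], each twin [w' <> x'] directly, and [x']
   by [x -> (p x)' -> x'].  No twin [w'] is a weak king, because [p w] dominates
   it: [p w -> w'], and [p w] points to everything [w'] points to and receives
   no arc from any vertex [w'] misses, so no short route leads from [w'] to
   [p w]. *)

Section WeakReach.

Variables (T : finType) (a : rel T).

Lemma wreach_arc u v : a u v -> wreach a u v.
Proof. by rewrite /wreach => ->. Qed.

Lemma wreach_arc2 u w v : a u w -> a w v -> wreach a u v.
Proof.
move=> auw awv; rewrite /wreach; apply/or3P; constructor 3.
by apply/existsP; exists w; rewrite auw awv.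
Qed.

Lemma dominating_not_wreach u v :
  oriented a -> a v u ->
  (forall w, a u w -> a v w) -> (forall w, nonadj a u w -> ~~ a w v) ->
  ~~ wreach a u v.
Proof.
move=> [_ asym] avu out_uv non_uv.
have aF x y : a x y -> a y x = false.
  by move=> axy; apply/negbTE; have := asym x y; rewrite axy.
rewrite /wreach /nonadj avu aF //=; apply/existsP => -[w].
have [auw | nauw] := boolP (a u w).
  by rewrite /= out_uv // aF ?out_uv.
have := non_uv w; rewrite /nonadj nauw /=.
by case: (a w u) => //= /(_ isT) /negbTE ->.
Qed.

End WeakReach.

Section Pullback.

Variables (T1 T2 : finType) (g : T1 -> T2) (h : T2 -> T1).
Hypotheses (gK : cancel g h) (hK : cancel h g).
Variable b : rel T2.

Let pb : rel T1 := fun x y => b (g x) (g y).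

Lemma oriented_pullback : oriented b -> oriented pb.
Proof. by case=> irr asym; split=> [x | x y]; [exact: irr | exact: asym]. Qed.

Lemma wreach_pullback u v : wreach pb u v = wreach b (g u) (g v).
Proof.
rewrite /wreach /nonadj; congr [|| _, _ | _].
apply/existsP/existsP => -[w]; first by exists (g w).
by exists (h w); rewrite /pb hK.
Qed.

Lemma weak_king_pullback u : weak_king pb u = weak_king b (g u).
Proof.
apply/forallP/forallP => king v.
- by have := king (h v); rewrite wreach_pullback hK -(can_eq hK) gK.
- by have := king (g v); rewrite wreach_pullback (can_eq gK).
Qed.

End Pullback.

Lemma in_neighbour_choice (T : finType) (a : rel T) :
  (forall v, ~~ transmitter a v) -> exists p : T -> T, forall v, a (p v) v.
Proof.
move=> no_tr; exists (fun v => odflt v [pick u | a u v]) => v.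
case: pickP => //= noin.
by case/forallPn: (no_tr v) => u; rewrite noin.
Qed.

Section TwinExtension.

Variables (T : finType) (a : rel T) (p : T -> T).
Hypotheses (a_oriented : oriented a) (pP : forall v, a (p v) v).

Definition twin_rel : rel (T + T) := fun s t =>
  match s, t with
  | inl x, inl y => a x y
  | inl x, inr w => x != w
  | inr w, inl x => x == w
  | inr v, inr w => p w == v
  end.

Lemma in_neighbour_neq v : (p v == v) = false.
Proof. by apply/eqP => pv; case: a_oriented => irr _; have := irr v; rewrite -{1}pv pP. Qed.

Lemma twin_rel_oriented : oriented twin_rel.
Proof.
case: a_oriented => irr asym; split.
  by case=> x /=; rewrite ?irr ?in_neighbour_neq.
case=> x [] y /=; first exact: asym.
- by case: eqP => // ->; rewrite eqxx.
- by case: eqP => // ->; rewrite eqxx.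
- apply/negP => /andP[/eqP pyx /eqP pxy].
  by have := asym x y; rewrite -{1}pyx -pxy !pP.
Qed.

Lemma twin_rel_weak_king x : weak_king twin_rel (inl x).
Proof.
apply/forallP => -[y | w]; apply/implyP => neq.
  apply: (@wreach_arc2 _ _ _ (inr y)); rewrite /= ?eqxx //.
  by apply: contra neq => /eqP ->.
have [-> | neq_wx] := eqVneq w x; last by apply: wreach_arc; rewrite /= eq_sym.
by apply: (@wreach_arc2 _ _ _ (inr (p x))); rewrite /= ?eqxx // eq_sym in_neighbour_neq.
Qed.

Lemma twin_rel_not_weak_king w : ~~ weak_king twin_rel (inr w).
Proof.
apply/forallPn; exists (inl (p w)); rewrite negb_imply /=.
apply: dominating_not_wreach; rewrite /= ?in_neighbour_neq //.
- exact: twin_rel_oriented.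
- case=> [y /eqP -> | u /eqP puw] //=.
  apply/eqP => pwu; case: a_oriented => _ asym.
  by have := asym w u; rewrite -{1}puw -pwu !pP.
- case=> [y | u]; rewrite /nonadj /=; first by case: eqP.
  by case/andP => _; rewrite eq_sym.
Qed.

End TwinExtension.

Theorem theorem10 (n : nat) (a : rel 'I_n) :
  oriented a ->
  (forall v, ~~ transmitter a v) ->
  exists (m : nat) (a2 : rel 'I_m) (f : 'I_n -> 'I_m),
    [/\ oriented a2,
        injective f,
        (forall x y, a2 (f x) (f y) = a x y)
      & (forall u, weak_king a2 u <-> exists x, u = f x)].
Proof.
move=> a_oriented /in_neighbour_choice[p pP].
exists (n + n), (fun u v => twin_rel a p (split u) (split v)), (fun x => unsplit (inl x)).
split=> [||x y|u]; rewrite ?unsplitK //.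
- exact: oriented_pullback (twin_rel_oriented a_oriented pP).
- by move=> x y /(congr1 split); rewrite !unsplitK => -[].
rewrite (weak_king_pullback splitK unsplitK).
case E: (split u) => [x | w]; split.
- by move=> _; exists x; rewrite -E splitK.
- by move=> _; exact: twin_rel_weak_king.
- by move=> king; have := twin_rel_not_weak_king a_oriented pP w; rewrite king.
- by case=> x ux; move: E; rewrite ux unsplitK.
Qed.
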